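(* Let $(Q,\cdot)$ be a quadratical quasigroup and $a,b\in Q$ distinct. Then for every positive integer $t$: $t1\cdot t4=t2$, $t2\cdot t3=t4$, $t3\cdot t2=t1$ and $t4\cdot t1=t3$.
   Context: A quadratical quasigroup is a quasigroup satisfying $xy\cdot x=zx\cdot yz$ (equivalently, a groupoid satisfying $x\cdot x=x$, $yx\cdot xy=x$, $xy\cdot zw=xz\cdot yw$). The elements $tk$ ($t\ge1$, $k\in\{1,2,3,4\}$) are defined by $11=a$, $12=ab$, $13=ba$, $14=b$ and, for $n\ge2$, $n1=(n-1)1\cdot(n-1)2$, $n2=(n-1)2\cdot(n-1)4$, $n3=(n-1)3\cdot(n-1)1$, $n4=(n-1)4\cdot(n-1)3$. *)

Definition is_quasigroup {Q : Type} (op : Q -> Q -> Q) : Prop :=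
  (forall a b : Q, exists x, op a x = b /\ forall x', op a x' = b -> x' = x) /\
  (forall a b : Q, exists y, op y a = b /\ forall y', op y' a = b -> y' = y).

Definition is_quadratical {Q : Type} (op : Q -> Q -> Q) : Prop :=
  is_quasigroup op /\
  forall x y z : Q, op (op x y) x = op (op z x) (op y z).

(* row op a b n = (t1, t2, t3, t4) with t = n + 1:
   11 = a, 12 = ab, 13 = ba, 14 = b; and
   n1 = (n-1)1.(n-1)2, n2 = (n-1)2.(n-1)4, n3 = (n-1)3.(n-1)1, n4 = (n-1)4.(n-1)3. *)
Fixpoint row {Q : Type} (op : Q -> Q -> Q) (a b : Q) (n : nat) : Q * Q * Q * Q :=
  match n with
  | O => (a, op a b, op b a, b)
  | S m =>
      let '(x1, x2, x3, x4) := row op a b m in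
      (op x1 x2, op x2 x4, op x3 x1, op x4 x3)
  end.

(* elt op a b t k  is the element  tk  (t >= 1, k in {1,2,3,4}). *)
Definition elt {Q : Type} (op : Q -> Q -> Q) (a b : Q) (t : nat) (k : nat) : Q :=
  let '(x1, x2, x3, x4) := row op a b (Nat.pred t) in
  match k with
  | 1 => x1 | 2 => x2 | 3 => x3 | _ => x4
  end.

(* The quadratical identity says that (zx)(yz) does not depend on z.  Comparing two
   of its instances and cancelling shows that pq = rs implies qr = sp, and two more
   instances, both equal to (wx)w, then give mediality xy.zw = xz.yw.  By mediality
   and yx.xy = x, every row of the table has the shape (u, uv, vu, v): the next row
   (u.uv, uv.v, vu.u, v.vu) has the same shape because u.uv times v.vu is
   (uv)(uv.vu) = uv.v. *)


Section QuasigroupCancellation.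

Variables (Q : Type) (op : Q -> Q -> Q).
Hypothesis op_quasigroup : is_quasigroup op.

Lemma quasigroup_cancel_l (x y y' : Q) : op x y = op x y' -> y = y'.
Proof.
  intros E.
  destruct (proj1 op_quasigroup x (op x y)) as [s [_ Hs]].
  rewrite (Hs y eq_refl). symmetry. exact (Hs y' (eq_sym E)).
Qed.

Lemma quasigroup_cancel_r (x x' y : Q) : op x y = op x' y -> x = x'.
Proof.
  intros E.
  destruct (proj2 op_quasigroup y (op x y)) as [s [_ Hs]].
  rewrite (Hs x eq_refl). symmetry. exact (Hs x' (eq_sym E)).
Qed.

End QuasigroupCancellation.

Section QuadraticalIdentities.

Variables (Q : Type) (op : Q -> Q -> Q).
Local Infix "⋅" := op (at level 40, left associativity).

Hypothesis op_cancel_l : forall x y y' : Q, x ⋅ y = x ⋅ y' -> y = y'.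
Hypothesis op_cancel_r : forall x x' y : Q, x ⋅ y = x' ⋅ y -> x = x'.
Hypothesis op_quadratical : forall x y z : Q, x ⋅ y ⋅ x = z ⋅ x ⋅ (y ⋅ z).

Lemma opxx (x : Q) : x ⋅ x = x.
Proof.
  apply (op_cancel_l (x ⋅ x)). symmetry. exact (op_quadratical x x x).
Qed.

Lemma op_flexC (x y : Q) : x ⋅ y ⋅ x = y ⋅ x ⋅ y.
Proof. rewrite (op_quadratical x y y), opxx. reflexivity. Qed.

Lemma op_absorb (x y : Q) : y ⋅ x ⋅ (x ⋅ y) = x.
Proof. rewrite <- op_quadratical, !opxx. reflexivity. Qed.

Lemma op_rotate (p q r s : Q) : p ⋅ q = r ⋅ s -> q ⋅ r = s ⋅ p.
Proof.
  intros E. apply (op_cancel_r _ _ (r ⋅ s)).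
  transitivity (q ⋅ r ⋅ (p ⋅ q)); [rewrite E; reflexivity |].
  rewrite <- (op_quadratical r p q), op_flexC, (op_quadratical p r s).
  reflexivity.
Qed.

Lemma op_medial (x y z w : Q) : x ⋅ y ⋅ (z ⋅ w) = x ⋅ z ⋅ (y ⋅ w).
Proof.
  symmetry. apply (op_rotate (z ⋅ w)).
  rewrite <- (op_quadratical w x z), (op_quadratical w x y). reflexivity.
Qed.

End QuadraticalIdentities.

Section RowShape.

Variables (Q : Type) (op : Q -> Q -> Q).
Local Infix "⋅" := op (at level 40, left associativity).

Hypothesis op_medial : forall x y z w : Q, x ⋅ y ⋅ (z ⋅ w) = x ⋅ z ⋅ (y ⋅ w).
Hypothesis op_absorb : forall x y : Q, y ⋅ x ⋅ (x ⋅ y) = x.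

Lemma op_row_step (u v : Q) : u ⋅ (u ⋅ v) ⋅ (v ⋅ (v ⋅ u)) = u ⋅ v ⋅ v.
Proof. rewrite op_medial, op_absorb. reflexivity. Qed.

Lemma row_shape (a b : Q) (n : nat) :
  exists u v : Q, row op a b n = (u, u ⋅ v, v ⋅ u, v).
Proof.
  induction n as [|n [u [v IH]]].
  - exists a, b. reflexivity.
  - exists (u ⋅ (u ⋅ v)), (v ⋅ (v ⋅ u)).
    simpl. rewrite IH, !op_row_step. reflexivity.
Qed.

End RowShape.

Theorem proposition3p5 (Q : Type) (op : Q -> Q -> Q) (a b : Q) :
  is_quadratical op -> a <> b ->
  forall t : nat, 1 <= t ->
    op (elt op a b t 1) (elt op a b t 4) = elt op a b t 2 /\
    op (elt op a b t 2) (elt op a b t 3) = elt op a b t 4 /\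
    op (elt op a b t 3) (elt op a b t 2) = elt op a b t 1 /\
    op (elt op a b t 4) (elt op a b t 1) = elt op a b t 3.
Proof.
  intros [Hquasi Hquad] _ t _.
  pose proof (quasigroup_cancel_l Q op Hquasi) as Hcancel_l.
  pose proof (quasigroup_cancel_r Q op Hquasi) as Hcancel_r.
  pose proof (op_absorb Q op Hcancel_l Hquad) as Habsorb.
  pose proof (op_medial Q op Hcancel_l Hcancel_r Hquad) as Hmedial.
  destruct (row_shape Q op Hmedial Habsorb a b (Nat.pred t)) as [u [v Hrow]].
  unfold elt. rewrite Hrow.
  repeat split; apply Habsorb.
Qed.
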